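(* Let $q$ be odd, $V$ an $n$-dimensional space over $\mathbb{F}_q$, $n\ge4$, with a non-degenerate alternating form ($G=\mathrm{Sp}(V)$, $q_0=q$) or a non-degenerate hermitian form ($G=\mathrm{SU}(V)$, $q=q_0^2$). Let $\mathcal T$ be the set of transvections of $G$ and $X\subseteq\mathcal T$ a generating set of $G$ such that ${}_VX$ spans $V$, $X_{V^*}$ spans $V^*$, $\Gamma(X)$ is strongly connected, the weights of all cycles of $\Gamma(X)$ generate $\mathbb{F}_q$, the directed diameter of $\Gamma(X'')$ is at most $2$ and its two-way diameter is at most $6$ for every $X\subseteq X''\subseteq\mathcal T$. If $L_3(X)=\mathbb{F}_q$ and $|\mathbb{F}_q:L_2(X)|\le2$, then $L_2(X^{(3)})=\mathbb{F}_q$ in the symplectic case and $L_2(X)=\mathbb{F}_{q_0}$ in the unitary case.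
   Context: Transvections $s=1+u_s\otimes\phi_s$ ($x\mapsto x+\phi_s(x)u_s$). $\Gamma(Y)$: directed graph on $Y$ with edge $[s,t]$ iff $\phi_t(u_s)\ne0$ (two-way if both directions are edges). Weight of $(r_1,\dots,r_k)$: $\prod_{i=1}^k\phi_{r_{i+1}}(u_{r_i})$ (indices mod $k$); a cycle is a tuple with nonzero weight. $L_k(Y)$: subfield generated by the weights of the cycles of $\Gamma(Y)$ of length at most $k$. $Y^{(k)}$: the set of transvections which can be written as a product of at most $k$ elements of $Y\cup Y^{-1}$. ${}_VX$, $X_{V^*}$: the sets of $u_s$, resp. $\phi_s$, $s\in X$. *)

From HB Require Import structures.
From mathcomp Require Import all_boot all_order all_algebra.
From mathcomp Require Import boolp.
Set Implicit Arguments. Unset Strict Implicit. Unset Printing Implicit Defensive.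
Import GRing.Theory.
Local Open Scope ring_scope.

Section Transvections.
Variables (F : finFieldType) (n : nat).
Local Notation M := 'M[F]_n.

Definition pv (u : 'rV[F]_n) (f : 'cV[F]_n) : F := (u *m f) ord0 ord0.

(* s is a transvection: s = 1 + u (x) phi, i.e. x |-> x + phi(x) u, u,phi nonzero, phi(u) = 0.
   Linear maps act on row vectors: x |-> x *m s. *)
Definition tv_data (s : M) (p : 'rV[F]_n * 'cV[F]_n) : bool :=
  [&& p.1 != 0, p.2 != 0, pv p.1 p.2 == 0 & s == 1%:M + p.2 *m p.1].

Definition is_transvection (s : M) : bool := [exists p, tv_data s p].

Definition tv_u (s : M) : 'rV[F]_n :=
  if [pick p | tv_data s p] is Some p then p.1 else 0.
Definition tv_f (s : M) : 'cV[F]_n :=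
  if [pick p | tv_data s p] is Some p then p.2 else 0.

Definition edge (s t : M) : bool := pv (tv_u s) (tv_f t) != 0.
Definition twoway (s t : M) : bool := edge s t && edge t s.

Definition cweight k (r : k.-tuple M) : F :=
  \prod_(i < k) pv (tv_u (tnth r i)) (tv_f (tnth r (ordS i))).

Definition is_cycle_weight (Y : {set M}) (k : nat) (w : F) : Prop :=
  exists r : k.-tuple M,
    [/\ (0 < k)%N, all (mem Y) r, cweight r != 0 & w = cweight r].

Definition subfield_closed (K : {set F}) : bool :=
  [&& 0 \in K, 1 \in K,
      [forall x in K, forall y in K, (x + y \in K) && (x * y \in K)],
      [forall x in K, - x \in K] & [forall x in K, x^-1 \in K]].
Definition gen_subfield (S : {set F}) : {set F} :=
  \bigcap_(K : {set F} | subfield_closed K && (S \subset K)) K.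

Definition Lk (k : nat) (Y : {set M}) : {set F} :=
  gen_subfield [set w | `[< exists m, (m <= k)%N /\ is_cycle_weight Y m w >]].
Definition Lall (Y : {set M}) : {set F} :=
  gen_subfield [set w | `[< exists m, is_cycle_weight Y m w >]].

Definition index_le2 (L : {set F}) : Prop :=
  exists d, (d <= 2)%N /\ #|[set: F]| = (#|L| ^ d)%N.

Definition inv_set (Y : {set M}) : {set M} := [set invmx y | y in Y].

Definition prod_of (Y : {set M}) (s : seq M) (g : M) : Prop :=
  all (fun x => (x \in Y) || (x \in inv_set Y)) s /\ g = foldr mulmx 1%:M s.

Definition Xk (k : nat) (Y : {set M}) : {set M} :=
  [set g | is_transvection g && `[< exists s, (size s <= k)%N /\ prod_of Y s g >]].

Definition generates (Y G : {set M}) : Prop :=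
  forall g, g \in G <-> exists s, prod_of Y s g.

Definition reach (e : rel M) (Y : {set M}) (d : option nat) (s t : M) : Prop :=
  exists p : seq M, [/\ all (mem Y) p, path e s p, last s p = t &
                        if d is Some d' then (size p <= d')%N else True].
Definition strongly_connected (Y : {set M}) : Prop :=
  forall s t, s \in Y -> t \in Y -> reach edge Y None s t.
Definition dir_diam_le (Y : {set M}) (d : nat) : Prop :=
  forall s t, s \in Y -> t \in Y -> reach edge Y (Some d) s t.
Definition twoway_diam_le (Y : {set M}) (d : nat) : Prop :=
  forall s t, s \in Y -> t \in Y -> reach twoway Y (Some d) s t.

Definition transv_of (G : {set M}) : {set M} := [set g in G | is_transvection g].

Definition u_span (Y : {set M}) : bool := row_full (\sum_(s in Y) <<tv_u s>>)%MS.
Definition f_span (Y : {set M}) : bool := row_full (\sum_(s in Y) <<(tv_f s)^T>>)%MS.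

Definition lemma_hyps (G X : {set M}) : Prop :=
  [/\ X \subset transv_of G, generates X G, u_span X && f_span X,
      strongly_connected X /\ Lall X = [set: F] &
      forall X2 : {set M}, X \subset X2 -> X2 \subset transv_of G ->
        dir_diam_le X2 2 /\ twoway_diam_le X2 6].

(* Sp(V) for alternating non-degenerate B: (x,y) = x B y^T *)
Definition is_alternating (B : M) : bool :=
  (B^T == - B) && [forall i, B i i == 0].
Definition Sp_set (B : M) : {set M} := [set g | g *m B *m g^T == B].

(* SU(V) for hermitian H w.r.t. sigma = (x |-> x^q0): h(x,y) = x H (sigma y)^T *)
Definition frobq (q0 : nat) (x : F) : F := x ^+ q0.
Definition is_hermitian (q0 : nat) (H : M) : bool := H^T == map_mx (frobq q0) H.
Definition SU_set (q0 : nat) (H : M) : {set M} :=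
  [set g | (g *m H *m (map_mx (frobq q0) g)^T == H) && (\det g == 1)].

End Transvections.

From HB Require Import structures.
From mathcomp Require Import all_boot all_order all_algebra finfield.
From mathcomp Require Import boolp ring.
Set Implicit Arguments. Unset Strict Implicit. Unset Printing Implicit Defensive.
Import GRing.Theory.
Local Open Scope ring_scope.

(* For a transvection s write N_s = s - 1 = u_s (x) phi_s.  The weight of a cycle
   (r_1, ..., r_k) is tr (N_{r_1} ... N_{r_k}).  If s preserves a non-degenerate form
   (x, y) |-> x B (y^sigma)^T, then N_s is skew-adjoint: (N_s^sigma)^T = - B^-1 N_s B.
   Hence sigma fixes every 2-cycle weight, and for sigma = id reversing a 3-cycle
   negates its weight.
   Unitary case: L_2(X) lies in the fixed field of x |-> x^q0, which has at most q0 elements,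
   and has index at most 2 in F_q, so it is F_q0.
   Symplectic case: if L_2(X) <> F_q, since L_3(X) = F_q some 3-cycle (a, b, c) in X has
   weight w outside L_2(X).  The transvection a^-1 b a lies in X^(3), and the 2-cycle
   (a^-1 b a, c) has weight p - 2w with p in L_2(X); as q is odd, this weight is not in
   L_2(X).  So L_2(X^(3)) strictly contains a subfield of index at most 2, and equals
   F_q. *)

Section Subfields.
Variable F : finFieldType.
Implicit Types (K L S : {set F}) (x y : F).

Section Closure.
Variables (K : {set F}) (sfK : subfield_closed K).

Lemma subfield0 : 0 \in K. Proof. by case/and5P: sfK. Qed.
Lemma subfield1 : 1 \in K. Proof. by case/and5P: sfK. Qed.

Lemma subfieldD x y : x \in K -> y \in K -> x + y \in K.
Proof.
by case/and5P: sfK => _ _ /'forall_implyP/(_ x) DM _ _ /DM/'forall_implyP/(_ y)/[apply]/andP[].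
Qed.

Lemma subfieldM x y : x \in K -> y \in K -> x * y \in K.
Proof.
by case/and5P: sfK => _ _ /'forall_implyP/(_ x) DM _ _ /DM/'forall_implyP/(_ y)/[apply]/andP[].
Qed.

Lemma subfieldN x : x \in K -> - x \in K.
Proof. by case/and5P: sfK => _ _ _ /'forall_implyP/(_ x). Qed.

Lemma subfieldV x : x \in K -> x^-1 \in K.
Proof. by case/and5P: sfK => _ _ _ _ /'forall_implyP/(_ x). Qed.

Lemma subfieldB x y : x \in K -> y \in K -> x - y \in K.
Proof. by move=> xK /subfieldN; apply: subfieldD. Qed.

End Closure.

Lemma subfield_closedP K :
  0 \in K -> 1 \in K -> {in K &, forall x y, x + y \in K} ->
  {in K &, forall x y, x * y \in K} -> {in K, forall x, - x \in K} ->
  {in K, forall x, x^-1 \in K} -> subfield_closed K.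
Proof.
move=> K0 K1 KD KM KN KV; apply/and5P; split=> //; apply/'forall_implyP => x xK.
- by apply/'forall_implyP => y yK; rewrite KD ?KM.
- exact: KN.
- exact: KV.
Qed.

Lemma gen_subfield_sub S : S \subset gen_subfield S.
Proof. by apply/bigcapsP=> K /andP[]. Qed.

Lemma gen_subfield_min S K : subfield_closed K -> S \subset K -> gen_subfield S \subset K.
Proof. by move=> sfK SK; apply: bigcap_inf; rewrite sfK SK. Qed.

Lemma gen_subfield_closed S : subfield_closed (gen_subfield S).
Proof.
have genP x : x \in gen_subfield S ->
    forall K, subfield_closed K -> S \subset K -> x \in K.
  by move=> /bigcapP genx K sfK SK; apply: genx; rewrite sfK SK.
apply: subfield_closedP.
- by apply/bigcapP=> K /andP[/subfield0].
- by apply/bigcapP=> K /andP[/subfield1].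
- by move=> x y /genP gx /genP gy; apply/bigcapP=> K /andP[sfK SK]; rewrite (subfieldD sfK) ?gx ?gy.
- by move=> x y /genP gx /genP gy; apply/bigcapP=> K /andP[sfK SK]; rewrite (subfieldM sfK) ?gx ?gy.
- by move=> x /genP gx; apply/bigcapP=> K /andP[sfK SK]; rewrite (subfieldN sfK) ?gx.
- by move=> x /genP gx; apply/bigcapP=> K /andP[sfK SK]; rewrite (subfieldV sfK) ?gx.
Qed.

Lemma fixed_subfield_closed (sigma : {rmorphism F -> F}) :
  subfield_closed [set x | sigma x == x].
Proof.
apply: subfield_closedP => [||x y|x y|x|x]; rewrite !inE ?rmorph0 ?rmorph1 //.
- by move=> /eqP sx /eqP sy; rewrite rmorphD sx sy.
- by move=> /eqP sx /eqP sy; rewrite rmorphM sx sy.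
- by move=> /eqP sx; rewrite rmorphN sx.
- by move=> /eqP sx; rewrite fmorphV sx.
Qed.

Lemma subfield_card_sqr_le K L x :
  subfield_closed K -> subfield_closed L -> K \subset L -> x \in L -> x \notin K ->
  (#|K| ^ 2 <= #|L|)%N.
Proof.
move=> sfK sfL /subsetP KL xL xNK.
pose f (ab : F * F) := ab.1 + ab.2 * x.
have f_inj : {in setX K K &, injective f}.
  move=> [a1 b1] [a2 b2]; rewrite !inE /f /= => /andP[a1K b1K] /andP[a2K b2K] eqf.
  have [eqb|neqb] := eqVneq b1 b2; first by move: eqf; rewrite eqb => /addIr ->.
  have ex : x = (a2 - a1) / (b1 - b2).
    have : x * (b1 - b2) - (a2 - a1) = 0.
      by rewrite -[RHS](subrr (a2 + b2 * x)) -{1}eqf; ring.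
    by move/eqP; rewrite subr_eq0 => /eqP <-; rewrite mulfK ?subr_eq0.
  by move: xNK; rewrite ex (subfieldM sfK) ?(subfieldV sfK) ?(subfieldB sfK).
have fKL : f @: setX K K \subset L.
  apply/subsetP=> y /imsetP[[a b]]; rewrite inE /= => /andP[aK bK] ->.
  by rewrite /f /= (subfieldD sfL) ?(subfieldM sfL) ?(KL a) ?(KL b).
by have := subset_leq_card fKL; rewrite card_in_imset // cardsX.
Qed.

Lemma index_le2_card K : index_le2 K -> (#|[set: F]| <= #|K| ^ 2)%N.
Proof.
case=> -[|[|[|d]]] [//= _ eF]; rewrite eF //.
- by have := card_finNzRing_gt1 F; rewrite -cardsT eF.
- by case: #|K| => // m; rewrite leq_pexp2l.
Qed.

Lemma index_le2_full K L x : index_le2 K -> subfield_closed K -> subfield_closed L ->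
  K \subset L -> x \in L -> x \notin K -> L = [set: F].
Proof.
move=> iK sfK sfL KL xL xNK; apply/eqP; rewrite eqEcard subsetT /=.
exact: leq_trans (index_le2_card iK) (subfield_card_sqr_le sfK sfL KL xL xNK).
Qed.

End Subfields.

Lemma odd_card_two_neq0 (F : finFieldType) : odd #|[set: F]| -> 2%:R != 0 :> F.
Proof.
rewrite cardsT; apply: contraL => /eqP two0.
have ch2 : 2%N \in [pchar F] by rewrite inE /= two0 eqxx.
rewrite (card_pprimeChar ch2) oddX orbF; apply: contraTneq (card_finNzRing_gt1 F).
by move=> k0; rewrite (card_pprimeChar ch2) k0.
Qed.


Section Frobenius.
Variables (F : finFieldType) (q0 : nat).
Hypothesis cardF : #|[set: F]| = (q0 ^ 2)%N.

Lemma frobq_is_nmod_morphism : nmod_morphism (frobq q0 : F -> F).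
Proof.
have q0_gt0 : (0 < q0)%N by move: (card_finNzRing_gt1 F); rewrite -cardsT cardF; case: q0.
rewrite /frobq; split=> [|x y]; first by rewrite expr0n eqn0Ngt q0_gt0.
apply: exprDn_pchar.
have [p p_pr chp] := finPcharP F.
rewrite (eq_pnat _ (pcharf_eq chp)); apply: pnat_dvd (_ : p.-nat #|F|).
  by rewrite -cardsT cardF dvdn_mulr.
by rewrite (card_pprimeChar chp) pnatX pnat_id.
Qed.

Lemma frobq_is_monoid_morphism : monoid_morphism (frobq q0 : F -> F).
Proof. by split=> [|x y]; rewrite /frobq ?expr1n ?exprMn. Qed.

Definition frobq_rmorphism : {rmorphism F -> F} :=
  HB.pack (frobq q0 : F -> F)
    (GRing.isNmodMorphism.Build _ _ _ frobq_is_nmod_morphism)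
    (GRing.isMonoidMorphism.Build _ _ _ frobq_is_monoid_morphism).

End Frobenius.

Lemma card_fixed_expr (R : finIdomainType) (m : nat) :
  (1 < m)%N -> (#|[set x : R | x ^+ m == x]| <= m)%N.
Proof.
move=> m_gt1; pose p : {poly R} := 'X^m - 'X.
have size_p : size p = m.+1 by rewrite size_polyDl ?size_polyXn ?size_polyN ?size_polyX.
have p_neq0 : p != 0 by rewrite -size_poly_eq0 size_p.
rewrite cardE -ltnS -size_p; apply: max_poly_roots p_neq0 _ (enum_uniq _).
by apply/allP=> x; rewrite mem_enum inE /root !hornerE subr_eq0.
Qed.

Section Transvections.
Variables (F : finFieldType) (n : nat).
Local Notation M := 'M[F]_n.
Implicit Types (s a b c g A B N : M) (u : 'rV[F]_n) (f : 'cV[F]_n).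

Definition tv_mx s : M := tv_f s *m tv_u s.

Lemma is_transvection_transv_of (G : {set M}) s : s \in transv_of G -> is_transvection s.
Proof. by rewrite inE => /andP[]. Qed.

Lemma tvP s : is_transvection s ->
  [/\ tv_u s != 0, tv_f s != 0, pv (tv_u s) (tv_f s) = 0 & s = 1%:M + tv_mx s].
Proof.
case/existsP=> p0 p0_data; rewrite /tv_mx /tv_u /tv_f.
by case: pickP => [p /and4P[-> -> /eqP-> /eqP->] | /(_ p0)]; rewrite ?p0_data.
Qed.

Lemma tv_mxE s : is_transvection s -> tv_mx s = s - 1%:M.
Proof. by case/tvP=> _ _ _ {2}->; rewrite addrC addKr. Qed.

Lemma mxtrace_rank1 u f : \tr (f *m u) = pv u f.
Proof. by rewrite mxtrace_mulC /mxtrace big_ord1. Qed.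

Lemma mul_rank1 f u f' u' : f *m u *m (f' *m u') = pv u f' *: (f *m u').
Proof. by rewrite mulmxA -(mulmxA f) [u *m f']mx11_scalar mul_mx_scalar scalemxAl. Qed.

Lemma rank1_sandwich f u A : f *m u *m A *m (f *m u) = \tr (f *m u *m A) *: (f *m u).
Proof. by rewrite -(mulmxA f) mul_rank1 mxtrace_rank1. Qed.

Lemma tv_mx_sqr s : is_transvection s -> tv_mx s *m tv_mx s = 0.
Proof. by case/tvP=> _ _ uf0 _; rewrite mul_rank1 uf0 scale0r. Qed.

Lemma mxtrace_tv_mx s : is_transvection s -> \tr (tv_mx s) = 0.
Proof. by case/tvP=> _ _ uf0 _; rewrite mxtrace_rank1. Qed.

Lemma cweight_single a : cweight [tuple a] = \tr (tv_mx a).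
Proof. by rewrite /cweight big_ord1 mxtrace_rank1. Qed.

Lemma cweight_pair a b : cweight [tuple a; b] = \tr (tv_mx a *m tv_mx b).
Proof. by rewrite /cweight !big_ord_recl big_ord0 mulr1 mul_rank1 mxtraceZ mxtrace_rank1. Qed.

Lemma cweight_triple a b c :
  cweight [tuple a; b; c] = \tr (tv_mx a *m tv_mx b *m tv_mx c).
Proof.
rewrite /cweight !big_ord_recl big_ord0 mulr1 mulrA !mul_rank1 -scalemxAl mul_rank1.
by rewrite scalerA mxtraceZ mxtrace_rank1.
Qed.

Lemma transvection_inv s : is_transvection s -> s *m (1%:M - tv_mx s) = 1%:M.
Proof.
move=> tr_s; have N2 := tv_mx_sqr tr_s; case/tvP: tr_s => _ _ _ {1}->.
by rewrite mulmxDl mul1mx mulmxBr mulmx1 N2 subr0 subrK.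
Qed.

Lemma transvection_unitmx s : is_transvection s -> s \in unitmx.
Proof. by move/transvection_inv/mulmx1_unit=> []. Qed.

Lemma invmx_transvection s : is_transvection s -> invmx s = 1%:M - tv_mx s.
Proof.
move=> tr_s; have /(congr1 (mulmx (invmx s))) := transvection_inv tr_s.
by rewrite mulmxA mulVmx ?transvection_unitmx // mul1mx mulmx1.
Qed.

Lemma is_transvection_conj g s :
  g \in unitmx -> is_transvection s -> is_transvection (invmx g *m s *m g).
Proof.
move=> g_unit /tvP[u_neq0 f_neq0 uf0 ->].
apply/existsP; exists (tv_u s *m g, invmx g *m tv_f s); apply/and4P; split=> /=.
- apply: contra u_neq0 => /eqP/(congr1 (mulmx^~ (invmx g))).
  by rewrite mul0mx -mulmxA (mulmxV g_unit) mulmx1 => ->.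
- apply: contra f_neq0 => /eqP/(congr1 (mulmx g)).
  by rewrite mulmx0 mulmxA (mulmxV g_unit) mul1mx => ->.
- by rewrite /pv mulmxA -(mulmxA _ g) mulmxV // mulmx1 -/(pv _ _) uf0.
- by rewrite mulmxDr mulmxDl mulmx1 mulVmx // !mulmxA.
Qed.

Lemma tv_mx_conj g s : g \in unitmx -> is_transvection s ->
  tv_mx (invmx g *m s *m g) = invmx g *m tv_mx s *m g.
Proof.
move=> g_unit tr_s; rewrite tv_mxE ?is_transvection_conj //.
by case/tvP: tr_s => _ _ _ {1}->; rewrite mulmxDr mulmxDl mulmx1 mulVmx // addrC addKr.
Qed.

Lemma mxtrace_conj_transvection a N1 N2 : is_transvection a ->
  \tr (invmx a *m N1 *m a *m N2) =
  \tr (N1 *m N2) + \tr (N1 *m tv_mx a *m N2) - \tr (tv_mx a *m N1 *m N2)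
  - \tr (tv_mx a *m N1) * \tr (tv_mx a *m N2).
Proof.
move=> tr_a; rewrite invmx_transvection //; case/tvP: tr_a => _ _ _ {2}->.
(* The products reach [mulmx] through the [comUnitRingType] instance used by [invmx],
   so the dimensions of the distributivity lemmas must be given explicitly. *)
rewrite (@mulmxBl _ n n n) mul1mx (@mulmxDr _ n n n) mulmx1 !(@mulmxDl _ n n n) !mulNmx.
rewrite [tv_mx a *m N1 *m tv_mx a]rank1_sandwich -scalemxAl -!scaleN1r !mxtraceD !mxtraceZ.
by ring.
Qed.

End Transvections.

Section SkewAdjoint.
Variables (F : finFieldType) (n : nat) (sigma : {rmorphism F -> F}) (B : 'M[F]_n).
Hypothesis B_unit : B \in unitmx.
Implicit Types (s N X Y : 'M[F]_n).

Definition isometries : {set 'M[F]_n} := [set g | g *m B *m (map_mx sigma g)^T == B].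

Definition skew_adjoint N : Prop := (map_mx sigma N)^T = - (invmx B *m N *m B).

Lemma transvection_skew_adjoint s :
  is_transvection s -> s *m B *m (map_mx sigma s)^T = B -> skew_adjoint (tv_mx s).
Proof.
move=> tr_s preserved.
have BsT : B *m (map_mx sigma s)^T = (1%:M - tv_mx s) *m B.
  by rewrite -{2}preserved !mulmxA (mulmx1C (transvection_inv tr_s)) mul1mx.
have : (map_mx sigma s)^T = invmx B *m (1%:M - tv_mx s) *m B.
  by rewrite -mulmxA -BsT mulmxA mulVmx // mul1mx.
case/tvP: tr_s => _ _ _ {1}->.
rewrite map_mxD map_mx1 linearD /= trmx1 (@mulmxBr _ n n n) mulmx1.
by rewrite (@mulmxBl _ n n n) mulVmx // => /addrI.
Qed.

Lemma isometry_transvection_skew s :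
  s \in transv_of isometries -> skew_adjoint (tv_mx s).
Proof.
by rewrite !inE => /andP[/eqP preserved tr_s]; apply: transvection_skew_adjoint.
Qed.

Lemma conjmxM X Y :
  invmx B *m X *m B *m (invmx B *m Y *m B) = invmx B *m (X *m Y) *m B.
Proof. by rewrite !mulmxA -(mulmxA _ B) mulmxV // mulmx1. Qed.

Lemma mxtrace_conjmx X : \tr (invmx B *m X *m B) = \tr X.
Proof. by rewrite mxtrace_mulC mulmxA mulmxV // mul1mx. Qed.

Lemma rmorph_mxtrace X : sigma (\tr X) = \tr (map_mx sigma X)^T.
Proof. by rewrite mxtrace_tr trace_map_mx. Qed.

Lemma skew_adjoint_mul N1 N2 : skew_adjoint N1 -> skew_adjoint N2 ->
  (map_mx sigma (N1 *m N2))^T = invmx B *m (N2 *m N1) *m B.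
Proof.
by move=> sk1 sk2; rewrite map_mxM trmx_mul sk1 sk2 mulNmx mulmxN opprK conjmxM.
Qed.

Lemma skew_adjoint_mxtrace2 N1 N2 : skew_adjoint N1 -> skew_adjoint N2 ->
  sigma (\tr (N1 *m N2)) = \tr (N1 *m N2).
Proof.
by move=> sk1 sk2; rewrite rmorph_mxtrace skew_adjoint_mul // mxtrace_conjmx mxtrace_mulC.
Qed.

Lemma skew_adjoint_mxtrace3 N0 N1 N2 :
  skew_adjoint N0 -> skew_adjoint N1 -> skew_adjoint N2 ->
  sigma (\tr (N0 *m N1 *m N2)) = - \tr (N1 *m N0 *m N2).
Proof.
move=> sk0 sk1 sk2; rewrite rmorph_mxtrace map_mxM trmx_mul skew_adjoint_mul // sk2.
by rewrite mulNmx conjmxM -scaleN1r mxtraceZ mxtrace_conjmx mulN1r mxtrace_mulC.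
Qed.

End SkewAdjoint.

Section CycleWeights.
Variables (F : finFieldType) (n : nat).
Local Notation M := 'M[F]_n.
Implicit Types (X Y : {set M}) (K : {set F}).

Lemma cweight_Lk k m Y (r : m.-tuple M) :
  (0 < m <= k)%N -> all (mem Y) r -> cweight r \in Lk k Y.
Proof.
case/andP=> m_gt0 le_mk rY; have [->|nz] := eqVneq (cweight r) 0.
  exact/subfield0/gen_subfield_closed.
apply/(subsetP (gen_subfield_sub _)); rewrite inE; apply/asboolP.
by exists m; split=> //; exists r.
Qed.

Lemma Lk_min k Y K : subfield_closed K ->
    (forall m (r : m.-tuple M), (0 < m <= k)%N -> all (mem Y) r -> cweight r != 0 ->
       cweight r \in K) ->
  Lk k Y \subset K.
Proof.
move=> sfK weightsK; apply: gen_subfield_min sfK _; apply/subsetP=> w.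
by rewrite inE => /asboolP[m [le_mk [r [m_gt0 rY nz ->]]]]; rewrite weightsK ?m_gt0.
Qed.

Lemma LkS k Y Y' : Y \subset Y' -> Lk k Y \subset Lk k Y'.
Proof.
move=> /subsetP YY'; apply: Lk_min (gen_subfield_closed _) _ => m r mk rY _.
by apply: cweight_Lk mk _; apply: sub_all rY => s /YY'.
Qed.

Lemma Lk_succ_witness k Y : Lk k.+1 Y != Lk k Y ->
  exists r : k.+1.-tuple M, all (mem Y) r && (cweight r \notin Lk k Y).
Proof.
apply: contraNP => noWitness; rewrite eqEsubset; apply/andP; split.
  apply: Lk_min (gen_subfield_closed _) _ => m r /andP[m_gt0]; rewrite leq_eqVlt.
  case/orP=> [/eqP eq_m | lt_mk] rY _; last by apply: cweight_Lk rY; rewrite m_gt0 -ltnS.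
  subst m; apply/negPn/negP => rN; apply: noWitness.
  by exists r; rewrite rY rN.
apply: Lk_min (gen_subfield_closed _) _ => m r /andP[m_gt0 le_mk] rY _.
by apply: cweight_Lk rY; rewrite m_gt0 ltnW.
Qed.

Lemma sub_Xk k X : (0 < k)%N -> X \subset [set s | is_transvection s] -> X \subset Xk k X.
Proof.
move=> k_gt0 /subsetP Xtr; apply/subsetP=> s sX; rewrite inE.
have := Xtr s sX; rewrite inE => ->; apply/asboolP.
by exists [:: s]; split=> //; split; rewrite /= ?sX ?mulmx1.
Qed.

Lemma conj_Xk3 X a b : a \in X -> b \in X -> is_transvection (invmx a *m b *m a) ->
  invmx a *m b *m a \in Xk 3 X.
Proof.
move=> aX bX tr_t; rewrite inE tr_t; apply/asboolP.
exists [:: invmx a; b; a]; split=> //; split; last by rewrite /= mulmx1 mulmxA.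
by rewrite /= aX bX imset_f ?orbT.
Qed.

End CycleWeights.

Section Symplectic.
Variables (F : finFieldType) (n : nat) (B : 'M[F]_n).
Hypothesis B_unit : B \in unitmx.
Local Notation Iso := (transv_of (isometries idfun B)).

Lemma Sp_set_isometries : Sp_set B = isometries idfun B.
Proof. by apply/setP=> g; rewrite !inE map_mx_id. Qed.

Lemma pair_mxtrace_Lk2 (X : {set 'M[F]_n}) a b :
  a \in X -> b \in X -> \tr (tv_mx a *m tv_mx b) \in Lk 2 X.
Proof. by move=> aX bX; rewrite -cweight_pair cweight_Lk //= aX bX. Qed.

Lemma cweight_conj_pair a b c : a \in Iso -> b \in Iso -> c \in Iso ->
  cweight [tuple invmx a *m b *m a; c] =
  \tr (tv_mx b *m tv_mx c) - \tr (tv_mx a *m tv_mx b) * \tr (tv_mx a *m tv_mx c)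
  - 2%:R * \tr (tv_mx a *m tv_mx b *m tv_mx c).
Proof.
move=> aI bI cI; have [tr_a tr_b] := conj (is_transvection_transv_of aI)
                                          (is_transvection_transv_of bI).
have /= antisym := skew_adjoint_mxtrace3 B_unit (isometry_transvection_skew B_unit aI)
  (isometry_transvection_skew B_unit bI) (isometry_transvection_skew B_unit cI).
rewrite cweight_pair tv_mx_conj ?transvection_unitmx // mxtrace_conj_transvection //.
by rewrite -[\tr (tv_mx b *m _ *m _)]opprK -antisym; ring.
Qed.

Lemma Lk2_Xk3_full (X : {set 'M[F]_n}) : odd #|[set: F]| -> X \subset Iso ->
  Lk 3 X = [set: F] -> index_le2 (Lk 2 X) -> Lk 2 (Xk 3 X) = [set: F].
Proof.
move=> oddF XI L3 iK; set K := Lk 2 X.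
have XXk : X \subset Xk 3 X.
  apply: sub_Xk => //; apply/subsetP=> s /(subsetP XI)/is_transvection_transv_of.
  by rewrite inE.
have KL : K \subset Lk 2 (Xk 3 X) := LkS 2 XXk.
have [KF | KnF] := eqVneq K [set: F]; first by apply/eqP; rewrite eqEsubset subsetT -KF.
have [r /andP[rX wNK]] : exists r : 3.-tuple _, all (mem X) r && (cweight r \notin K).
  by apply: Lk_succ_witness; rewrite L3 eq_sym.
move: rX wNK; case/tupleP: r => a r; case/tupleP: r => b r; case/tupleP: r => c r.
rewrite tuple0 /= cweight_triple => /and4P[aX bX cX _] wNK.
have [aI bI cI] := And3 (subsetP XI a aX) (subsetP XI b bX) (subsetP XI c cX).
have tXk : invmx a *m b *m a \in Xk 3 X.
  apply/conj_Xk3/is_transvection_conj/(is_transvection_transv_of bI) => //.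
  exact/transvection_unitmx/(is_transvection_transv_of aI).
have xL : cweight [tuple invmx a *m b *m a; c] \in Lk 2 (Xk 3 X).
  by rewrite cweight_Lk //= tXk (subsetP XXk).
apply: index_le2_full iK (gen_subfield_closed _) (gen_subfield_closed _) KL xL _.
rewrite cweight_conj_pair //; apply: contra wNK => xK.
have sfK : subfield_closed K := gen_subfield_closed _.
set w := \tr (tv_mx a *m tv_mx b *m tv_mx c) in xK *.
set p := \tr (tv_mx b *m tv_mx c) - _ in xK.
have pK : p \in K.
  by apply: (subfieldB sfK); [|apply: (subfieldM sfK)]; apply: pair_mxtrace_Lk2.
have -> : w = (p - (p - 2%:R * w)) / 2%:R by field; apply: odd_card_two_neq0.
apply: (subfieldM sfK); first exact: (subfieldB sfK) pK xK.
by apply/(subfieldV sfK)/(subfieldD sfK); apply: (subfield1 sfK).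
Qed.

End Symplectic.

Lemma Lk2_sub_fixed (F : finFieldType) (n : nat) (sigma : {rmorphism F -> F})
    (B : 'M[F]_n) (X : {set 'M[F]_n}) :
  B \in unitmx -> X \subset transv_of (isometries sigma B) ->
  Lk 2 X \subset [set x | sigma x == x].
Proof.
move=> B_unit /subsetP XI; apply: Lk_min (fixed_subfield_closed sigma) _.
case=> [|[|[|m]]] r //= _; case/tupleP: r => a r; [|case/tupleP: r => b r].
  rewrite (tuple0 r) /= cweight_single => /andP[/XI/is_transvection_transv_of tr_a _].
  by rewrite mxtrace_tv_mx ?eqxx.
rewrite (tuple0 r) /= cweight_pair inE => /and3P[/XI aI /XI bI _] _.
by rewrite (skew_adjoint_mxtrace2 B_unit (isometry_transvection_skew B_unit aI)
  (isometry_transvection_skew B_unit bI)).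
Qed.

Lemma Lk2_SU (F : finFieldType) (q0 n : nat) (H : 'M[F]_n) (X : {set 'M[F]_n}) :
  #|[set: F]| = (q0 ^ 2)%N -> H \in unitmx -> X \subset transv_of (SU_set q0 H) ->
  index_le2 (Lk 2 X) -> Lk 2 X = [set x : F | x ^+ q0 == x].
Proof.
move=> cardF H_unit XSU iK.
have L2_fixed : Lk 2 X \subset [set x : F | x ^+ q0 == x].
  apply: (Lk2_sub_fixed (sigma := frobq_rmorphism cardF) H_unit).
  by apply: subset_trans XSU _; apply/subsetP=> g; rewrite !inE => /andP[/andP[-> _] ->].
have q0_gt1 : (1 < q0)%N.
  by move: (card_finNzRing_gt1 F); rewrite -cardsT cardF; case: (q0) => [|[]].
apply/eqP; rewrite eqEcard L2_fixed /= (leq_trans (card_fixed_expr _ q0_gt1)) //.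
by rewrite -(@leq_exp2r _ _ 2) // -cardF index_le2_card.
Qed.

Theorem lemma4p5 :
  (* symplectic case *)
  (forall (F : finFieldType) (n : nat) (B : 'M[F]_n) (X : {set 'M[F]_n}),
     odd #|[set: F]| -> (4 <= n)%N ->
     is_alternating B -> \det B != 0 ->
     lemma_hyps (Sp_set B) X ->
     Lk 3 X = [set: F] -> index_le2 (Lk 2 X) ->
     Lk 2 (Xk 3 X) = [set: F])
  /\
  (* unitary case, q = q0^2 *)
  (forall (F : finFieldType) (q0 n : nat) (H : 'M[F]_n) (X : {set 'M[F]_n}),
     #|[set: F]| = (q0 ^ 2)%N -> odd #|[set: F]| -> (4 <= n)%N ->
     is_hermitian q0 H -> \det H != 0 ->
     lemma_hyps (SU_set q0 H) X ->
     Lk 3 X = [set: F] -> index_le2 (Lk 2 X) ->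
     Lk 2 X = [set x : F | x ^+ q0 == x]).
Proof.
split=> [F n B X oddF _ _ detB [XSp _ _ _ _] L3 iK
        |F q0 n H X cardF _ _ _ detH [XSU _ _ _ _] _ iK].
- apply: (@Lk2_Xk3_full _ _ B) => //; first by rewrite unitmxE unitfE.
  by rewrite -Sp_set_isometries.
- by apply: (@Lk2_SU _ q0 _ H) => //; rewrite unitmxE unitfE.
Qed.
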